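(* Let $f\in H_{d,n}$ be a centered random polynomial with $O(n+1)$-invariant distribution and let $n'\le n$ be a positive integer. Then the restriction $f'\in H_{d,n'}$ of $f$ to $\mathbb{R}^{n'+1}$ (obtained by substituting $X_{n'+1}=\cdots=X_n=0$) is $O(n'+1)$-invariant and has the same parameter, $\delta(f')=\delta(f)$. Moreover, if $f$ is Kostlan distributed, then so is $f'$.
   Context: $H_{d,n}$ is the space of homogeneous real polynomials of degree $d$ in $X_0,\ldots,X_n$, with $O(n+1)$ acting by $(gf)(X)=f(g^{-1}X)$; $f$ is $O(n+1)$-invariant if $gf$ has the same distribution as $f$ for all $g$. The parameter is $\delta(f)=\mathbb{E}(\partial_{X_k}f(q))^2/\mathbb{E}f(q)^2$ with $q=(1,0,\ldots,0)$, $1\le k\le n$ (equivalently $\mathbb{E}\|Df(x)\|^2/(n\,\mathbb{E}f(x)^2)$ for $x\in S^n$, $Df(x)$ the derivative of $f|_{S^n}$). $f=\sum_{|\alpha|=d}f_\alpha X^\alpha$ is Kostlan distributed if the coefficients $f_\alpha$ are independent centered Gaussian with variance $\frac{d!}{\alpha_0!\cdots\alpha_n!}$. *)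

From HB Require Import structures.
From mathcomp Require Import all_boot all_order all_algebra.
From mathcomp Require Import mpoly.
From mathcomp Require Import all_classical all_reals all_analysis.

Set Implicit Arguments.
Unset Strict Implicit.
Unset Printing Implicit Defensive.

Import Order.TTheory GRing.Theory Num.Theory.

Local Open Scope classical_set_scope.
Local Open Scope ring_scope.

Notation hpoly R n := (mpoly.mpoly n.+1 R).

Section RandomForms.
Context {R : realType}.


Definition Xvar n (i : 'I_n.+1) : hpoly R n := mpoly.mpolyX R (mpoly.mnm1 i).

Definition in_H (d n : nat) (p : hpoly R n) : Prop :=
  forall m : mpoly.multinom n.+1, mpoly.mdeg m != d -> mpoly.mcoeff m p = 0.

(** Exponent vectors alpha with |alpha| = d : the coordinates of H_{d,n}. *)
Definition dmon (n d : nat) := {m : mpoly.multinom n.+1 | mpoly.mdeg m == d}.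

Definition coefm n (m : mpoly.multinom n.+1) (p : hpoly R n) : R := mpoly.mcoeff m p.

Definition coefvec n d (p : hpoly R n) : dmon n d -> R := fun m => coefm (val m) p.

(** Borel (product) sigma-algebra on the coordinate space R^{dmon n d}:
    generated by the measurable rectangles. *)
Definition rects (I : Type) : set (set (I -> R)) :=
  [set B | exists A : I -> set R,
     (forall i, measurable (A i)) /\ B = [set c | forall i, A i (c i)]].

Definition same_law {dT} {T : measurableType dT} (P : probability T R)
  n d (F G : T -> hpoly R n) : Prop :=
  forall B : set (dmon n d -> R), <<s (@rects (dmon n d)) >> B ->
    P ((fun w => @coefvec n d (F w)) @^-1` B) = P ((fun w => @coefvec n d (G w)) @^-1` B).

Definition orthogonal_mx n (g : 'M[R]_n.+1) : Prop := g *m g^T = 1%:M.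

Definition Oact n (g : 'M[R]_n.+1) (p : hpoly R n) : hpoly R n :=
  mpoly.comp_mpoly [tuple \sum_(j < n.+1) invmx g i j *: Xvar j | i < n.+1] p.

Definition Oinvariant {dT} {T : measurableType dT} (P : probability T R)
  n d (F : T -> hpoly R n) : Prop :=
  forall g : 'M[R]_n.+1, orthogonal_mx g -> same_law P d F (fun w => Oact g (F w)).

Definition restrict_poly n n' (p : hpoly R n) : hpoly R n' :=
  mpoly.comp_mpoly
    [tuple (if (i <= n')%N then Xvar (inord i : 'I_n'.+1) else 0) | i < n.+1] p.

Definition qpt n : 'I_n.+1 -> R := fun i => if i == ord0 then 1 else 0.

Definition delta_param {dT} {T : measurableType dT} (P : probability T R)
  n (F : T -> hpoly R n) (k : nat) : \bar R :=
  ('E_P[fun w => ((mpoly.meval (@qpt n) (mpoly.mderiv (inord k) (F w))) ^+ 2)%R]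
   * ('E_P[fun w => ((mpoly.meval (@qpt n) (F w)) ^+ 2)%R])^-1)%E.

Definition mutually_independent {dT} {T : measurableType dT}
  (P : probability T R) (I : eqType) (X : I -> T -> R) : Prop :=
  forall (J : seq I) (A : I -> set R), uniq J -> (forall i, measurable (A i)) ->
    P [set w | forall i, i \in J -> A i (X i w)]
    = (\prod_(i <- J) P (X i @^-1` A i))%E.

Definition kostlan_distributed {dT} {T : measurableType dT} (P : probability T R)
  n d (F : T -> hpoly R n) : Prop :=
  (forall w, in_H d (F w)) /\
  mutually_independent P (fun m : dmon n d => fun w => coefm (val m) (F w)) /\
  (forall (m : dmon n d) (A : set R), measurable A ->
     P ((fun w => coefm (val m) (F w)) @^-1` A)
     = normal_prob 0
         (Num.sqrt ((d`!)%:R / (\prod_(i < n.+1) ((val m) i)`!)%:R)) A).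

End RandomForms.

From HB Require Import structures.
From mathcomp Require Import all_boot all_order all_algebra.
From mathcomp Require Import mpoly.
From mathcomp Require Import all_classical all_reals all_analysis.

Import Order.TTheory GRing.Theory Num.Theory.
Local Open Scope classical_set_scope.
Local Open Scope ring_scope.

Set Implicit Arguments.
Unset Strict Implicit.
Unset Printing Implicit Defensive.

(* Restricting to R^{n'+1} composes with the inclusion, so the coefficient of
   X^a in f' is the coefficient of X^(a,0,...,0) in f: the coefficient vector of
   f' is a subfamily of that of f.  This transports equality in law and the
   Kostlan distribution (the extra factorials are 0! = 1).  Each g' in O(n'+1)
   extends to diag(g', 1) in O(n+1) and restriction intertwines the two actions,
   so invariance descends.  Finally q lies in R^{n'+1} and, for k <= n',
   differentiation in X_k commutes with restriction, so delta is unchanged. *)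

Section ExtendMultinom.
Variables n n' : nat.
Hypothesis le_n'n : (n' <= n)%N.

Local Notation widen := (@widen_ord n'.+1 n.+1 le_n'n).

Lemma big_narrow_idx (Rt : Type) (idx : Rt) (op : Monoid.com_law idx)
    (F : 'I_n.+1 -> Rt) :
  (forall i : 'I_n.+1, (n' < i)%N -> F i = idx) ->
  \big[op/idx]_(i < n.+1) F i = \big[op/idx]_(i < n'.+1) F (widen i).
Proof.
move=> Fhigh; rewrite (bigID (fun i : 'I_n.+1 => (i <= n')%N)) /=.
rewrite [X in op _ X]big1 ?Monoid.mulm1; last by move=> i; rewrite -ltnNge; apply: Fhigh.
exact: big_ord_narrow_leq.
Qed.

Lemma widen_leq (i : 'I_n'.+1) : (widen i <= n')%N.
Proof. exact: ltn_ord i. Qed.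

Definition extm (m : 'X_{1..n'.+1}) : 'X_{1..n.+1} :=
  [multinom (if (i <= n')%N then m (inord i) else 0%N) | i < n.+1].

Definition truncm (m : 'X_{1..n.+1}) : 'X_{1..n'.+1} :=
  [multinom m (widen i) | i < n'.+1].

Lemma extm_widen m i : extm m (widen i) = m i.
Proof. by rewrite mnmE widen_leq inord_val. Qed.

Lemma extm_high m (i : 'I_n.+1) : (n' < i)%N -> extm m i = 0%N.
Proof. by rewrite mnmE ltnNge => /negbTE ->. Qed.

Lemma extmK : cancel extm truncm.
Proof. by move=> m; apply/mnmP => i; rewrite mnmE extm_widen. Qed.

Lemma extm_inj : injective extm.
Proof. exact: can_inj extmK. Qed.

Lemma truncmK (m : 'X_{1..n.+1}) :
  (forall i : 'I_n.+1, (n' < i)%N -> m i = 0%N) -> extm (truncm m) = m.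
Proof.
move=> mhigh; apply/mnmP => i; rewrite mnmE; case: leqP => [le_in'|/mhigh //].
by rewrite mnmE; congr (m _); apply: val_inj; rewrite /= inordK.
Qed.

Lemma extmD : {morph extm : m1 m2 / (m1 + m2)%MM}.
Proof.
move=> m1 m2; apply/mnmP => i; rewrite mnmDE !mnmE.
by case: ifP => _; rewrite ?mnmDE.
Qed.

Lemma extmU (k : 'I_n'.+1) : extm U_(k)%MM = U_(widen k)%MM.
Proof.
apply/mnmP => i; rewrite !mnmE; case: leqP => [le_in'|lt_n'i].
  by rewrite -(inj_eq val_inj) /= inordK.
suff /negbTE -> : widen k != i by [].
by apply: contraTneq lt_n'i => <-; rewrite -leqNgt widen_leq.
Qed.

Lemma big_extm (Rt : Type) (idx : Rt) (op : Monoid.com_law idx) (G : nat -> Rt) m :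
  G 0%N = idx -> \big[op/idx]_(i < n.+1) G (extm m i) = \big[op/idx]_(i < n'.+1) G (m i).
Proof.
move=> G0; rewrite big_narrow_idx => [|i /extm_high ->//].
by apply: eq_bigr => i _; rewrite extm_widen.
Qed.

Lemma mdeg_extm m : mdeg (extm m) = mdeg m.
Proof. by rewrite !mdegE (@big_extm _ _ _ (fun k : nat => k)). Qed.

End ExtendMultinom.

Arguments extm {n n'} m.

Lemma comp_mpoly_comp k1 k2 k3 (R : comNzRingType) (lf : k2.-tuple {mpoly R[k3]})
    (lg : k1.-tuple {mpoly R[k2]}) p :
  comp_mpoly lf (comp_mpoly lg p) = comp_mpoly [tuple comp_mpoly lf (tnth lg i) | i < k1] p.
Proof.
rewrite [comp_mpoly lg p]comp_mpolyEX [in RHS]comp_mpolyEX raddf_sum /=.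
apply: eq_bigr => m _; rewrite linearZ /= !comp_mpolyX rmorph_prod /=.
by congr (_ *: _); apply: eq_bigr => i _; rewrite rmorphXn tnth_map tnth_ord_tuple.
Qed.

Section Restriction.
Context {R : realType}.
Variables n n' : nat.
Hypothesis le_n'n : (n' <= n)%N.

Local Notation widen := (@widen_ord n'.+1 n.+1 le_n'n).
Local Notation restrict := (@restrict_poly R n n').

Lemma widen_inord (i : 'I_n.+1) : (i <= n')%N -> widen (inord i) = i.
Proof. by move=> le_in'; apply: val_inj; rewrite /= inordK. Qed.

Lemma restrictX_extm m : restrict 'X_[extm m] = 'X_[m].
Proof.
rewrite /restrict_poly comp_mpolyX (big_narrow_idx le_n'n); last first.
  by move=> i /(extm_high m) ->; rewrite expr0.
rewrite [RHS]mpolyXE_id; apply: eq_bigr => i _.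
by rewrite tnth_map tnth_ord_tuple extm_widen widen_leq inord_val.
Qed.

Lemma restrictX_high (m : 'X_{1..n.+1}) (i : 'I_n.+1) :
  (n' < i)%N -> m i != 0%N -> restrict 'X_[m] = 0.
Proof.
move=> lt_n'i mi_neq0; rewrite /restrict_poly comp_mpolyX (bigD1 i) //=.
by rewrite tnth_map tnth_ord_tuple leqNgt lt_n'i /= expr0n (negbTE mi_neq0) mul0r.
Qed.

Lemma coef_restrictX m m' : (restrict 'X_[m])@_m' = (m == extm m')%:R.
Proof.
pose high := [exists i : 'I_n.+1, (n' < i)%N && (m i != 0%N)].
have [/existsP [i /andP [lt_n'i mi_neq0]]|] := boolP high.
  rewrite (restrictX_high lt_n'i mi_neq0) mcoeff0.
  suff /negbTE -> : m != extm m' by [].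
  by apply: contraNneq mi_neq0 => ->; rewrite extm_high.
rewrite negb_exists => /forallP mlow.
have {mlow}<- : extm (truncm le_n'n m) = m.
  by apply: truncmK => i lt_n'i; move: (mlow i); rewrite lt_n'i negbK => /eqP.
by rewrite restrictX_extm mcoeffX (inj_eq (extm_inj le_n'n)).
Qed.

Lemma coef_restrict p m' : (restrict p)@_m' = p@_(extm m').
Proof.
rewrite /restrict_poly comp_mpolyEX [in RHS](mpolyE p) !raddf_sum /=.
apply: eq_bigr => m _.
by rewrite !mcoeffZ mcoeffX -coef_restrictX.
Qed.

Lemma mderiv_restrict p (k : 'I_n'.+1) :
  restrict (p^`M(widen k)) = (restrict p)^`M(k).
Proof.
apply/mpolyP => m; rewrite coef_restrict !mcoeff_deriv coef_restrict.
by rewrite extmD extmU extm_widen.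
Qed.

Lemma meval_restrict (v : 'I_n'.+1 -> R) p :
  meval v (restrict p) = meval (fun i : 'I_n.+1 => if (i <= n')%N then v (inord i) else 0) p.
Proof.
rewrite /restrict_poly comp_mpoly_meval; apply: meval_eq => i.
by rewrite tnth_map tnth_ord_tuple; case: ifP => _; rewrite ?mevalXU ?meval0.
Qed.

End Restriction.

Lemma orthogonal_invmx (R : realType) k (g : 'M[R]_k.+1) :
  orthogonal_mx g -> invmx g = g^T.
Proof.
move=> gK; have [g_unit _] := mulmx1_unit gK.
by rewrite -[invmx g]mulmx1 -gK mulmxA mulVmx // mul1mx.
Qed.

Section LinearSubstitution.
Context {R : realType}.

Definition lin_subst k (h : 'M[R]_k.+1) : k.+1.-tuple (hpoly R k) :=
  [tuple \sum_(j < k.+1) h i j *: Xvar j | i < k.+1].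

Variables n n' : nat.
Hypothesis le_n'n : (n' <= n)%N.

Local Notation widen := (@widen_ord n'.+1 n.+1 le_n'n).
Local Notation restrict := (@restrict_poly R n n').

Definition extmx (h : 'M[R]_n'.+1) : 'M[R]_n.+1 :=
  \matrix_(i, j) if (i <= n')%N && (j <= n')%N then h (inord i) (inord j)
                 else (i == j)%:R.

Lemma extmx_widen h i j : extmx h (widen i) (widen j) = h i j.
Proof. by rewrite mxE !widen_leq !inord_val. Qed.

Lemma extmx_highl h (i j : 'I_n.+1) : (n' < i)%N -> extmx h i j = (i == j)%:R.
Proof. by rewrite mxE ltnNge => /negbTE ->. Qed.

Lemma extmx_highr h (i j : 'I_n.+1) : (n' < j)%N -> extmx h i j = (i == j)%:R.
Proof. by rewrite mxE ltnNge => /negbTE ->; rewrite andbF. Qed.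

Lemma trmx_extmx h : (extmx h)^T = extmx h^T.
Proof. by apply/matrixP => i j; rewrite !mxE andbC eq_sym. Qed.

Lemma extmx1 : extmx 1%:M = 1%:M.
Proof.
apply/matrixP => i j; rewrite !mxE; case: ifP => // /andP [le_in' le_jn'].
by rewrite -(inj_eq val_inj) /= !inordK.
Qed.

Lemma extmx_mul a b : extmx (a *m b) = extmx a *m extmx b.
Proof.
apply/matrixP => i j; rewrite [RHS]mxE.
have [lt_n'i|le_in'] := ltnP n' i.
  rewrite extmx_highl // (bigD1 i) //= extmx_highl // eqxx mul1r extmx_highl //.
  rewrite big1 ?addr0 // => k k_neq_i.
  by rewrite extmx_highl // eq_sym (negbTE k_neq_i) mul0r.
have [lt_n'j|le_jn'] := ltnP n' j.
  rewrite extmx_highr // (bigD1 j) //= [extmx a i j]extmx_highr //.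
  rewrite [extmx b j j]extmx_highr // eqxx mulr1 big1 ?addr0 // => k k_neq_j.
  by rewrite [extmx b k j]extmx_highr // (negbTE k_neq_j) mulr0.
have -> : i = widen (inord i) by rewrite widen_inord.
have -> : j = widen (inord j) by rewrite widen_inord.
rewrite extmx_widen mxE.
rewrite (big_narrow_idx le_n'n) => [|k lt_n'k]; last first.
  rewrite extmx_highr // mulr_natl; case: eqP => // ik.
  by move: lt_n'k; rewrite -ik ltnNge widen_leq.
by apply: eq_bigr => k _; rewrite !extmx_widen.
Qed.

Lemma orthogonal_extmx g : orthogonal_mx g -> orthogonal_mx (extmx g).
Proof. by rewrite /orthogonal_mx trmx_extmx -extmx_mul => ->; apply: extmx1. Qed.

Lemma restrict_comp_lin_subst h p :
  restrict (comp_mpoly (lin_subst (extmx h)) p) = comp_mpoly (lin_subst h) (restrict p).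
Proof.
rewrite /restrict_poly !comp_mpoly_comp; congr comp_mpoly; apply: eq_from_tnth => i.
rewrite !tnth_map !tnth_ord_tuple raddf_sum /=.
under eq_bigr do rewrite linearZ /= comp_mpolyXU -tnth_nth tnth_map tnth_ord_tuple.
have [lt_n'i|le_in'] := ltnP n' i.
  rewrite raddf0; apply: big1 => j _.
  rewrite extmx_highl //; case: eqP => [<-|_]; last by rewrite scale0r.
  by rewrite leqNgt lt_n'i scaler0.
rewrite comp_mpolyXU -tnth_nth tnth_map tnth_ord_tuple.
rewrite (big_narrow_idx le_n'n) => [|j]; last first.
  by rewrite ltnNge => /negbTE ->; rewrite scaler0.
by apply: eq_bigr => j _; rewrite mxE le_in' !widen_leq !inord_val.
Qed.

Lemma restrict_Oact g p :
  orthogonal_mx g -> restrict (Oact (extmx g) p) = Oact g (restrict p).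
Proof.
move=> g_orth; rewrite /Oact (orthogonal_invmx g_orth).
rewrite (orthogonal_invmx (orthogonal_extmx g_orth)) trmx_extmx.
exact: restrict_comp_lin_subst.
Qed.

End LinearSubstitution.

Section Reindexing.
Context {R : realType}.
Variables (I I' : Type) (e : I' -> I).
Hypothesis e_inj : injective e.

Definition extend_sets (A : I' -> set R) : I -> set R :=
  fun i => [set x | forall j, e j = i -> A j x].

Lemma extend_setsE A j : extend_sets A (e j) = A j.
Proof.
apply/seteqP; split => x /=; first by apply.
by move=> Ajx j' /e_inj ->.
Qed.

Lemma measurable_extend_sets A i :
  (forall j, measurable (A j)) -> measurable (extend_sets A i).
Proof.
move=> mA; have [[j <-]|no_preim] := pselect (exists j, e j = i).
  by rewrite extend_setsE.
suff -> : extend_sets A i = setT by [].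
by apply/seteqP; split => // x _ j ej_i; case: no_preim; exists j.
Qed.

Lemma sigma_rects_precomp (B : set (I' -> R)) : <<s @rects R I' >> B ->
  <<s @rects R I >> ((fun c : I -> R => c \o e) @^-1` B).
Proof.
pose S := image_set_system setT (fun c : I -> R => c \o e) <<s @rects R I >>.
have S_sigma : sigma_algebra setT S.
  by apply: sigma_algebra_image; apply: smallest_sigma_algebra.
have rects_S : @rects R I' `<=` S.
  move=> _ [A [mA ->]]; rewrite /S /image_set_system /= setTI; apply: sub_sigma_algebra.
  exists (extend_sets A); split; first by move=> i; apply: measurable_extend_sets.
  by apply/seteqP; split => c /= cA; [move=> i j <-|move=> j; apply: (cA (e j))].
by move=> /(smallest_sub S_sigma rects_S); rewrite /S /image_set_system /= setTI.
Qed.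

End Reindexing.

Lemma mutually_independent_comp (R : realType) dT (T : measurableType dT)
    (P : probability T R) (I I' : eqType) (X : I -> T -> R) (e : I' -> I) :
  injective e -> mutually_independent P X -> mutually_independent P (fun j => X (e j)).
Proof.
move=> e_inj Xind J A J_uniq mA.
have eJ_uniq : uniq (map e J) by rewrite map_inj_uniq.
have := Xind _ _ eJ_uniq (fun i => measurable_extend_sets e_inj i mA).
rewrite big_map; under eq_bigr do rewrite extend_setsE //.
move <-; congr (P _); apply/seteqP; split => w /= XA.
  by move=> _ /mapP [j Jj ->]; rewrite extend_setsE //; apply: XA.
by move=> j Jj; have := XA (e j) (map_f e Jj); rewrite extend_setsE.
Qed.

Section RestrictedRandomForm.
Context {R : realType}.
Variables n n' d : nat.
Hypothesis le_n'n : (n' <= n)%N.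

Local Notation restrict := (@restrict_poly R n n').

Lemma extd_subproof (m : dmon n' d) : mdeg (@extm n n' (val m)) == d.
Proof. by rewrite (mdeg_extm le_n'n) (valP m). Qed.

Definition extd (m : dmon n' d) : dmon n d := exist _ (extm (val m)) (extd_subproof m).

Lemma extd_inj : injective extd.
Proof. by move=> m1 m2 /(congr1 val) /(extm_inj le_n'n) /val_inj. Qed.

Lemma coefm_restrict (m : dmon n' d) p : coefm (val m) (restrict p) = coefm (val (extd m)) p.
Proof. exact: coef_restrict. Qed.

Lemma coefvec_restrict p : @coefvec R n' d (restrict p) = @coefvec R n d p \o extd.
Proof. by apply/funext => m; rewrite /coefvec coefm_restrict. Qed.

Lemma in_H_restrict p : in_H d p -> in_H d (restrict p).
Proof.
by move=> pH m mdeg_neq; rewrite /coefm coef_restrict //; apply: pH; rewrite mdeg_extm.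
Qed.

Lemma meval_qpt_restrict p : meval (@qpt R n') (restrict p) = meval (@qpt R n) p.
Proof.
rewrite meval_restrict //; apply: meval_eq => i; rewrite /qpt.
case: leqP => [le_in'|lt_n'i]; first by rewrite -!(inj_eq val_inj) /= inordK.
by case: eqP lt_n'i => // ->.
Qed.

Variables (dT : measure_display) (T : measurableType dT) (P : probability T R).

Lemma same_law_restrict (F G : T -> hpoly R n) :
  same_law P d F G -> same_law P d (fun w => restrict (F w)) (fun w => restrict (G w)).
Proof.
move=> FG B mB; under [in LHS]eq_fun do rewrite coefvec_restrict.
under [in RHS]eq_fun do rewrite coefvec_restrict.
exact: FG _ (sigma_rects_precomp extd_inj mB).
Qed.

Lemma Oinvariant_restrict (F : T -> hpoly R n) :
  Oinvariant P d F -> Oinvariant P d (fun w => restrict (F w)).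
Proof.
move=> Finv g g_orth.
suff -> : (fun w => Oact g (restrict (F w))) = (fun w => restrict (Oact (extmx n g) (F w))).
  exact/same_law_restrict/Finv/(orthogonal_extmx le_n'n).
by apply/funext => w; rewrite restrict_Oact.
Qed.

Lemma delta_param_restrict (F : T -> hpoly R n) k :
  (k <= n')%N -> delta_param P (fun w => restrict (F w)) k = delta_param P F k.
Proof.
move=> le_kn'; rewrite /delta_param.
have -> : inord k = @widen_ord n'.+1 n.+1 le_n'n (inord k).
  by apply: val_inj; rewrite /= !inordK // ltnS (leq_trans le_kn').
congr (_ * _^-1)%E; congr (expectation P _); apply/funext => w.
  by rewrite -(mderiv_restrict le_n'n) meval_qpt_restrict.
by rewrite meval_qpt_restrict.
Qed.

Lemma kostlan_distributed_restrict (F : T -> hpoly R n) :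
  kostlan_distributed P d F -> kostlan_distributed P d (fun w => restrict (F w)).
Proof.
move=> [FH [Find Fnormal]]; split; [|split].
- by move=> w; apply: in_H_restrict.
- suff -> : (fun (m : dmon n' d) w => coefm (val m) (restrict (F w))) =
             (fun m w => coefm (val (extd m)) (F w)).
    exact: mutually_independent_comp extd_inj Find.
  by apply/funext => m; apply/funext => w; rewrite coefm_restrict.
- move=> m A mA; under eq_fun do rewrite coefm_restrict.
  rewrite (Fnormal (extd m) A mA).
  by have -> : (\prod_(i < n.+1) (val (extd m) i)`!)%N = (\prod_(i < n'.+1) (val m i)`!)%N
    by apply: big_extm.
Qed.

End RestrictedRandomForm.

Theorem lemma4p7 (R : realType) (dT : measure_display) (T : measurableType dT)
  (P : probability T R) (d n n' : nat) (F : T -> hpoly R n) :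
  (0 < n')%N -> (n' <= n)%N ->
  (* f is a random element of H_{d,n} *)
  (forall w, in_H d (F w)) ->
  (forall m : mpoly.multinom n.+1, measurable_fun setT (fun w => coefm m (F w))) ->
  (* f is centered *)
  (forall m : dmon n d, 'E_P[fun w => coefm (val m) (F w)]%E = 0%E) ->
  (* f has O(n+1)-Oinvariant distribution *)
  Oinvariant P d F ->
  let F' := fun w => restrict_poly n' (F w) in
  Oinvariant P d F' /\
  (forall k : nat, (1 <= k <= n')%N -> delta_param P F' k = delta_param P F k) /\
  (kostlan_distributed P d F -> kostlan_distributed P d F').
Proof.
move=> _ le_n'n _ _ _ Finv F'; split; [|split].
- exact: Oinvariant_restrict.
- by move=> k /andP [_ le_kn']; apply: delta_param_restrict.
- exact: kostlan_distributed_restrict.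
Qed.
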